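(* Fix real numbers $\lambda>0$, $u$, $V$, $\alpha$. Let $c_1=-1$, $c_2=0$, $c_3=1$ and let $P_1=1$, $P_2=\lambda X$, $P_3=\lambda^2(3X^2-2)$. Let $\widehat P_1=1$ and let $\widehat P_2,\widehat P_3$ be real polynomials of degree at most $2$ such that the matrix $\widehat M=(\widehat P_k(c_j))_{1\le k,j\le 3}$ is invertible. Let $C$ be the (invertible) $3\times 3$ matrix with $\widehat M = CM$, where $M=(P_k(c_j))_{1\le k,j\le 3}$ (so the first row of $C$ is $(1,0,0)$). Let $T$ (resp. $\widehat T$) be the $3\times 3$ matrix defined by $P_k(c_j-u)=\sum_{l=1}^3 T_{k,l}P_l(c_j)$ (resp. $\widehat P_k(c_j-u)=\sum_{l=1}^3 \widehat T_{k,l}\widehat P_l(c_j)$) for all $1\le k,j\le 3$. Let $$E=\begin{pmatrix}1&0&0\\ V\lambda&0&0\\ \alpha\lambda^2&0&0\end{pmatrix},\qquad \widehat E = CE,$$ and for real $s,s'$ let $S=\widehat S=\mathrm{diag}(0,s,s')$. Define $$R=M^{-1}T^{-1}\bigl(I+S(TET^{-1}-I)\bigr)TM,\qquad \widehat R=\widehat M^{-1}\widehat T^{-1}\bigl(I+\widehat S(\widehat T\widehat E\widehat T^{-1}-I)\bigr)\widehat T\widehat M,$$ where $I$ is the $3\times3$ identity. Then $\widehat R=R$ for all $(s,s')\in\mathbb{R}^2$ if and only if $\widehat P_2\in\operatorname{span}(P_1,P_2)$ and $\widehat P_3\in\operatorname{span}(P_1,P_3)$ in $\mathbb{R}[X]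/\bigl(X(X-1)(X+1)\bigr)$.
   Context: This concerns the D1Q3 lattice Boltzmann scheme with relative velocity $u$: the moments of the distribution vector $F=(f_1,f_2,f_3)^T$ are $\sum_j P_k(c_j-u)f_j$, $k=1,2,3$; $M$ maps $F$ to the moments with $u=0$ and $T$ is the change of basis to the moments with relative velocity $u$; $E$ encodes the equilibrium values $\rho^{eq}=\rho$, $q^{eq}(0)=\lambda V\rho$, $\varepsilon^{eq}(0)=\lambda^2\alpha\rho$; $S$ contains the relaxation parameters; and $R$ is the matrix of the relaxation step $F^\star=RF$. The hatted objects describe the same scheme built from another choice of moment polynomials $(\widehat P_1,\widehat P_2,\widehat P_3)$ with the same first moment, the same equilibrium distributions and the same relaxation parameters. *)

From HB Require Import structures.
From mathcomp Require Import all_boot all_order all_algebra.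
From mathcomp Require Import reals.
Set Implicit Arguments. Unset Strict Implicit. Unset Printing Implicit Defensive.
Import Order.TTheory GRing.Theory Num.Theory.
Local Open Scope ring_scope.

Section D1Q3.
Variable R : realType.

(* velocities c_1 = -1, c_2 = 0, c_3 = 1, indexed by j : 'I_3 (j = 0,1,2) *)
Definition cpt (j : 'I_3) : R := j%:R - 1.

Definition pol1 : {poly R} := 1.
Definition pol2 (lam : R) : {poly R} := lam *: 'X.
Definition pol3 (lam : R) : {poly R} := lam ^+ 2 *: (3%:P * 'X ^+ 2 - 2%:P).

Definition Pstd (lam : R) (k : 'I_3) : {poly R} :=
  match val k with 0%N => pol1 | 1%N => pol2 lam | _ => pol3 lam end.

Definition Phat (P2 P3 : {poly R}) (k : 'I_3) : {poly R} :=
  match val k with 0%N => 1 | 1%N => P2 | _ => P3 end.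

(* (P_k(c_j - u))_{k,j} ; with u = 0 this is the moment matrix M *)
Definition momat (P : 'I_3 -> {poly R}) (u : R) : 'M[R]_3 :=
  \matrix_(k, j) (P k).[cpt j - u].

(* T is the unique matrix with P_k(c_j - u) = sum_l T_{k,l} P_l(c_j),
   i.e. momat P u = T *m momat P 0 (momat P 0 invertible) *)
Definition shiftmx (P : 'I_3 -> {poly R}) (u : R) : 'M[R]_3 :=
  momat P u *m invmx (momat P 0).

Definition Emat (lam V alpha : R) : 'M[R]_3 :=
  \matrix_(i, j) if val j == 0%N then nth 0 [:: 1; V * lam; alpha * lam ^+ 2] i
                 else 0.

Definition Smat (s s' : R) : 'M[R]_3 := diag_mx (\row_i nth 0 [:: 0; s; s'] i).

Definition Cmat (lam : R) (P2 P3 : {poly R}) : 'M[R]_3 :=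
  momat (Phat P2 P3) 0 *m invmx (momat (Pstd lam) 0).

Definition relaxmx (P : 'I_3 -> {poly R}) (u : R) (E : 'M[R]_3) (s s' : R)
  : 'M[R]_3 :=
  let M := momat P 0 in
  let T := shiftmx P u in
  invmx M *m invmx T *m (1%:M + Smat s s' *m (T *m E *m invmx T - 1%:M))
    *m T *m M.

Definition modpoly3 : {poly R} := 'X * ('X - 1) * ('X + 1).

End D1Q3.

From HB Require Import structures.
From mathcomp Require Import all_boot all_order all_algebra.
From mathcomp Require Import reals.
From mathcomp Require Import ring.
Set Implicit Arguments.
Unset Strict Implicit.
Unset Printing Implicit Defensive.
Import Order.TTheory GRing.Theory Num.Theory.
Local Open Scope ring_scope.

(* Every moment polynomial has degree at most 2, so a moment matrix factors as
   M_u = (coefficient matrix) * Vandermonde(c - u); hence hat M = C M forces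
   hat M_u = C M_u for every u.  Both relaxation matrices are then conjugates by
   M_u of matrices acting on moments: R = M_u^-1 (I + S (H - I)) M_u and
   hat R = M_u^-1 C^-1 (I + S (C H C^-1 - I)) C M_u with H = T E T^-1.  As
   P_1 = hat P_1 = 1, the first rows of C and T are (1,0,0), so E C = E and
   H = y e_1^T with y_1 = 1.  Thus hat R = R iff [S, C] (H - I) = 0, i.e. iff
   [S, C] vanishes outside its first column; since [S, C]_ij = (s_i - s_j) C_ij,
   this holds for all (s, s') iff C_23 = C_32 = 0.  Finally X(X-1)(X+1)
   vanishes exactly at the velocities, where hat P_k takes the values of
   sum_l C_kl P_l and the P_l are independent (M is invertible): C_23 = 0 iff
   hat P_2 is in span(P_1, P_2) modulo X(X-1)(X+1), and likewise for C_32.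
   (Indices are 1-based as in the paper; ordinals of 'I_3 start at 0.) *)

Section MomentRelaxation.
Variables (F : comUnitRingType) (n : nat).
Implicit Types (A B G S H : 'M[F]_n).

Lemma invmxM A B : A \in unitmx -> B \in unitmx ->
  invmx (A *m B) = invmx B *m invmx A.
Proof.
move=> uA uB; have uAB : A *m B \in unitmx by rewrite unitmx_mul uA.
apply: (can_inj (mulKmx uAB)).
by rewrite mulmxV // -mulmxA (mulmxA B) mulmxV // mul1mx mulmxV.
Qed.

Definition relax_moments S H : 'M[F]_n := 1%:M + S *m (H - 1%:M).

Lemma relax_moments_conj S H G : G \in unitmx ->
  invmx G *m relax_moments S (G *m H *m invmx G) *m G = relax_moments S H <->
  (S *m G - G *m S) *m (H - 1%:M) = 0.
Proof.
move=> uG.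
have -> : invmx G *m relax_moments S (G *m H *m invmx G) *m G
          = 1%:M + invmx G *m (S *m G *m (H - 1%:M)).
  rewrite /relax_moments mulmxDr mulmx1 mulmxDl mulVmx //; congr (_ + _).
  have -> : G *m H *m invmx G - 1%:M = G *m (H - 1%:M) *m invmx G.
    by rewrite mulmxBr mulmx1 mulmxBl mulmxV.
  by rewrite !mulmxA mulmxKV.
rewrite /relax_moments mulmxBl; split=> [/addrI e | /eqP].
  by apply/eqP; rewrite subr_eq0 -[X in X == _](mulKVmx uG) e mulmxA.
by rewrite subr_eq0 => /eqP ->; rewrite -!mulmxA mulKmx.
Qed.

End MomentRelaxation.

Section FirstCoordinate.
Variables (F : comPzRingType) (n : nat).
Local Notation e0 := (delta_mx 0 0 : 'rV[F]_n.+1).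

Lemma commutator_diag_mx (d : 'rV[F]_n) (A : 'M[F]_n) i j :
  (diag_mx d *m A - A *m diag_mx d) i j = (d 0 i - d 0 j) * A i j.
Proof. by rewrite mul_diag_mx mul_mx_diag !mxE mulrBl [A i j * _]mulrC. Qed.

Lemma mul_col_delta0_sub1 (K : 'M[F]_n.+1) (y : 'cV[F]_n.+1) : y 0 0 = 1 ->
  K *m (y *m delta_mx 0 0 - 1%:M) = 0 <-> forall i j, j != 0 -> K i j = 0.
Proof.
move=> y0; rewrite mulmxBr mulmx1 mulmxA; split=> [/subr0_eq e i j j0 | K0].
  by rewrite -e mxE big_ord1 !mxE (negPf j0) andbF mulr0.
apply/eqP; rewrite subr_eq0; apply/eqP/matrixP=> i j.
rewrite mxE big_ord1 !mxE [ord0 == _]eqxx andTb.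
have [->|j0] := eqVneq j 0; last by rewrite mulr0 K0.
rewrite mulr1 (bigD1 0) //= y0 mulr1 big1 ?addr0 // => l l0.
by rewrite K0 ?mul0r.
Qed.

Lemma delta0_mul_col (T : 'M[F]_n.+1) (v : 'cV[F]_n.+1) :
  e0 *m T = e0 -> (T *m v) 0 0 = v 0 0.
Proof.
move=> eT; have := congr1 (fun A => (A *m v) 0 0) eT.
by rewrite /= -mulmxA -!rowE !mxE.
Qed.

Lemma row_span_delta (w : 'rV[F]_n.+1) (k : 'I_n.+1) : k != 0 ->
  (exists a b, w = a *: delta_mx 0 0 + b *: delta_mx 0 k) <->
  (forall l, l != 0 -> l != k -> w 0 l = 0).
Proof.
move=> k0; split=> [[a [b ->]] l l0 lk | w0].
  by rewrite !mxE (negPf l0) (negPf lk) !andbF !mulr0 addr0.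
exists (w 0 0), (w 0 k); apply/matrixP=> i l; rewrite ord1 !mxE !eqxx /=.
have [->|l0] := eqVneq l 0; first by rewrite eq_sym (negPf k0) mulr1 mulr0 addr0.
have [->|lk] := eqVneq l k; first by rewrite mulr0 mulr1 add0r.
by rewrite w0 // !mulr0 addr0.
Qed.

End FirstCoordinate.

Lemma conj_col_delta0 (F : comUnitRingType) n (T : 'M[F]_n.+1) (v : 'cV[F]_n.+1) :
  T \in unitmx -> delta_mx 0 0 *m T = delta_mx 0 0 :> 'rV_n.+1 ->
  T *m (v *m delta_mx 0 0) *m invmx T = (T *m v) *m delta_mx 0 0.
Proof.
move=> uT eT; rewrite !mulmxA -mulmxA; congr (_ *m _).
by rewrite -[X in X *m invmx T]eT mulmxK.
Qed.

Section D1Q3.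
Variable R : realType.
Implicit Types (P Q : 'I_3 -> {poly R}) (u : R).
Local Notation e0 := (delta_mx 0 0 : 'rV[R]_3).

Definition coefmx P : 'M[R]_3 := \matrix_(k, l) (P k)`_l.

Definition nodes u : 'rV[R]_3 := \row_j (cpt R j - u).

Lemma momat_coefmx P u : (forall k, size (P k) <= 3)%N ->
  momat P u = coefmx P *m Vandermonde 3 (nodes u).
Proof.
move=> sP; apply/matrixP=> k j; rewrite !mxE (horner_coef_wide _ (sP k)).
by apply: eq_bigr => l _; rewrite !mxE.
Qed.

Lemma Vandermonde_nodes_unit u : Vandermonde 3 (nodes u) \in unitmx.
Proof.
rewrite unitmxE det_Vandermonde unitfE; apply/prodf_neq0 => i _.
apply/prodf_neq0 => j ij; rewrite !mxE /cpt.
have -> : j%:R - 1 - u - (i%:R - 1 - u) = j%:R - i%:R :> R by ring.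
by rewrite subr_eq0 eqr_nat neq_ltn ij orbT.
Qed.

Lemma unitmx_momat P u : (forall k, size (P k) <= 3)%N ->
  (momat P u \in unitmx) = (coefmx P \in unitmx).
Proof.
by move=> sP; rewrite momat_coefmx // unitmx_mul Vandermonde_nodes_unit andbT.
Qed.

Lemma momat_change_basis P Q G : (forall k, size (P k) <= 3)%N ->
  (forall k, size (Q k) <= 3)%N -> momat Q 0 = G *m momat P 0 ->
  forall u, momat Q u = G *m momat P u.
Proof.
move=> sP sQ; have uV := Vandermonde_nodes_unit 0.
rewrite !momat_coefmx // mulmxA => /(can_inj (mulmxK uV)) QGP u.
by rewrite !momat_coefmx // QGP mulmxA.
Qed.

Lemma size_Pstd (lam : R) k : (size (Pstd lam k) <= 3)%N.
Proof.
case: k => -[|[|[|//]]] ?; rewrite /Pstd /=.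
- by rewrite /pol1 size_poly1.
- by rewrite /pol2 (leq_trans (size_scale_leq _ _)) // size_polyX.
rewrite /pol3 (leq_trans (size_scale_leq _ _)) // (leq_trans (size_polyD _ _)) //.
rewrite geq_max size_polyN size_polyC (leq_trans (leq_b1 _)) // andbT mul_polyC.
by rewrite (leq_trans (size_scale_leq _ _)) // size_polyXn.
Qed.

Lemma coefmx_Pstd_unit (lam : R) : lam != 0 -> coefmx (Pstd lam) \in unitmx.
Proof.
move=> lam0; have trig : is_trig_mx (coefmx (Pstd lam)).
  apply/is_trig_mxP => -[[|[|[|//]]] ?] -[[|[|[|//]]] ?] //= _;
  by rewrite mxE /Pstd /= /pol1 /pol2 -?polyC1 ?coefC // coefZ coefX mulr0.
rewrite unitmxE det_trig // unitfE; apply/prodf_neq0 => -[[|[|[|//]]] ?] _.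
all: rewrite mxE /Pstd /= /pol1 /pol2 /pol3 -?polyC1 ?coefC ?oner_eq0 // coefZ.
  by rewrite coefX mulr1.
rewrite coefB coefCM coefXn coefC /= mulr1 subr0 mulf_neq0 ?expf_neq0 //.
by rewrite pnatr_eq0.
Qed.

Lemma momat_Pstd_unit (lam : R) u : lam != 0 -> momat (Pstd lam) u \in unitmx.
Proof.
by move=> lam0; rewrite unitmx_momat ?coefmx_Pstd_unit // => k; exact: size_Pstd.
Qed.

Lemma delta0_mul_momat P u : P 0 = 1 -> e0 *m momat P u = const_mx 1.
Proof. by move=> P0; apply/matrixP=> i j; rewrite -rowE !mxE P0 hornerC. Qed.

Lemma delta0_mul_momat_ratio P Q u v : P 0 = 1 -> Q 0 = 1 ->
  momat P v \in unitmx ->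
  e0 *m (momat Q u *m invmx (momat P v)) = e0.
Proof.
move=> P0 Q0 uP; rewrite mulmxA delta0_mul_momat // -(delta0_mul_momat v P0).
by rewrite mulmxK.
Qed.

Lemma relaxmxE P u E s s' : momat P 0 \in unitmx -> momat P u \in unitmx ->
  relaxmx P u E s s' =
  invmx (momat P u) *m
    relax_moments (Smat s s') (shiftmx P u *m E *m invmx (shiftmx P u)) *m
  momat P u.
Proof.
move=> uM uMu.
have uT : shiftmx P u \in unitmx by rewrite unitmx_mul uMu unitmx_inv.
have TM : shiftmx P u *m momat P 0 = momat P u by rewrite mulmxKV.
by rewrite /relaxmx -mulmxA TM -invmxM // TM.
Qed.

Lemma relaxmx_change_basis P Q G E u s s' :
  momat P 0 \in unitmx -> momat P u \in unitmx -> G \in unitmx ->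
  momat Q 0 = G *m momat P 0 -> momat Q u = G *m momat P u -> E *m G = E ->
  relaxmx Q u (G *m E) s s' = relaxmx P u E s s' <->
  (Smat s s' *m G - G *m Smat s s') *m
    (shiftmx P u *m E *m invmx (shiftmx P u) - 1%:M) = 0.
Proof.
move=> uM uMu uG MQ0 MQu EG.
have uGM : G *m momat P 0 \in unitmx by rewrite unitmx_mul uG.
have uGMu : G *m momat P u \in unitmx by rewrite unitmx_mul uG.
have conjE : shiftmx Q u *m (G *m E) *m invmx (shiftmx Q u) =
             G *m (shiftmx P u *m E *m invmx (shiftmx P u)) *m invmx G.
  rewrite /shiftmx MQ0 MQu !invmxM ?invmxK ?unitmx_mul ?unitmx_inv ?uM ?uG //.
  by rewrite !mulmxA mulmxKV // -(mulmxA _ E G) EG.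
rewrite !relaxmxE ?MQ0 ?MQu // conjE invmxM // -relax_moments_conj //.
split=> [e | <-]; last by rewrite !mulmxA.
apply: (can_inj (mulKVmx uMu)); apply: (can_inj (mulmxK uMu)).
by move: e; rewrite !mulmxA.
Qed.

Lemma cpt_inj : injective (cpt R).
Proof. by move=> i j /addIr /eqP; rewrite eqr_nat => /eqP /val_inj. Qed.

Lemma modpoly3_prod : modpoly3 R = \prod_(z <- codom (cpt R)) ('X - z%:P).
Proof.
rewrite /codom big_map big_enum /= !big_ord_recl big_ord0 mulr1 /cpt !lift0 /=.
rewrite !rmorphB /= !polyC_natr /modpoly3; ring.
Qed.

Lemma dvdp_modpoly3 p : modpoly3 R %| p <-> forall j, root p (cpt R j).
Proof.
rewrite modpoly3_prod; split=> [dp j | rp].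
  by apply: root_dvdp dp _; rewrite root_prod_XsubC codom_f.
apply: uniq_roots_dvdp; first by apply/allP => _ /codomP[j ->].
by rewrite uniq_rootsE (map_inj_uniq cpt_inj) enum_uniq.
Qed.

Lemma dvdp_modpoly3_momat P (w : 'rV[R]_3) q : momat P 0 \in unitmx ->
  (forall j, q.[cpt R j] = (w *m momat P 0) 0 j) ->
  modpoly3 R %| q <-> w = 0.
Proof.
move=> uM qE; rewrite dvdp_modpoly3; transitivity (w *m momat P 0 = 0).
  split=> [r | e j]; last by rewrite /root qE e mxE.
  by apply/matrixP=> i j; rewrite ord1 -qE [RHS]mxE; apply/eqP/r.
split=> [/(congr1 (mulmx^~ (invmx (momat P 0)))) | ->]; last by rewrite mul0mx.
by rewrite mulmxK // mul0mx.
Qed.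

Lemma exists_dvdp_modpoly3 P Q G k :
  momat P 0 \in unitmx -> momat Q 0 = G *m momat P 0 -> k != 0 ->
  (exists a b, modpoly3 R %| Q k - (a *: P 0 + b *: P k)) <->
  (forall l, l != 0 -> l != k -> G k l = 0).
Proof.
move=> uM MQ k0.
transitivity (forall l, l != 0 -> l != k -> row k G 0 l = 0); last first.
  by split=> Gk0 l l0 lk; move: (Gk0 l l0 lk); rewrite mxE.
rewrite -row_span_delta //.
have dvdpE a b : modpoly3 R %| Q k - (a *: P 0 + b *: P k) <->
                 row k G = a *: e0 + b *: delta_mx 0 k.
  rewrite (dvdp_modpoly3_momat (w := row k G - (a *: e0 + b *: delta_mx 0 k)) uM).
    by split=> [/subr0_eq | ->]; rewrite ?subrr.
  move=> j; rewrite mulmxBl mulmxDl -!scalemxAl -!rowE -row_mul -MQ !mxE !subr0.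
  by rewrite !hornerE.
by split=> -[a [b /dvdpE h]]; exists a, b.
Qed.

Lemma Smat_commutator_eq0 (G : 'M[R]_3) : (forall j, j != 0 -> G 0 j = 0) ->
  (forall s s' i j, j != 0 -> (Smat s s' *m G - G *m Smat s s') i j = 0) <->
  (forall i, i != 0 -> forall j, j != 0 -> j != i -> G i j = 0).
Proof.
move=> G0; split=> [S0 i i0 j j0 ji | G0' s s' i j j0].
  (* (s, s') = (1, 2) makes the diagonal of S injective. *)
  have sigmaE (l : 'I_3) : nth 0 [:: 0; 1; 2] l = l%:R :> R.
    by case: l => -[|[|[|]]].
  move: (S0 1 2 i j j0); rewrite /Smat commutator_diag_mx !mxE !sigmaE.
  move=> /eqP; rewrite mulf_eq0 subr_eq0 eqr_nat.
  case/orP=> [/eqP/val_inj ij | /eqP //].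
  by rewrite ij eqxx in ji.
rewrite /Smat commutator_diag_mx; have [->|i0] := eqVneq i 0.
  by rewrite G0 ?mulr0.
have [->|ji] := eqVneq j i; first by rewrite subrr mul0r.
by rewrite G0' ?mulr0.
Qed.

Lemma forall_ord3_neq0 (Pr : 'I_3 -> Prop) :
  (forall k, k != 0 -> Pr k) <-> Pr 1 /\ Pr 2.
Proof.
split=> [h | [h1 h2]]; first by split; apply: h.
case=> -[|[|[|//]]] lt3 // _.
  by have -> : Ordinal lt3 = 1 by exact: val_inj.
by have -> : Ordinal lt3 = 2 by exact: val_inj.
Qed.

Definition Evec (lam V alpha : R) : 'cV[R]_3 :=
  \col_i nth 0 [:: 1; V * lam; alpha * lam ^+ 2] i.

Lemma Emat_rank1 (lam V alpha : R) : Emat lam V alpha = Evec lam V alpha *m e0.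
Proof.
apply/matrixP=> i j; rewrite !mxE big_ord1 !mxE [ord0 == _]eqxx andTb.
by case: j => -[|[|[|//]]] ?; rewrite ?mulr1 ?mulr0.
Qed.

Section ChangeOfMoments.
Variables (P Q : 'I_3 -> {poly R}) (u : R) (v : 'cV[R]_3).
Hypotheses (sP : forall k, (size (P k) <= 3)%N).
Hypotheses (sQ : forall k, (size (Q k) <= 3)%N).
Hypotheses (P0 : P 0 = 1) (Q0 : Q 0 = 1) (v0 : v 0 0 = 1).
Hypotheses (uM : momat P 0 \in unitmx) (uMQ : momat Q 0 \in unitmx).

Local Notation G := (momat Q 0 *m invmx (momat P 0)).

Lemma relaxmx_change_basis_rank1 :
  (forall s s',
     relaxmx Q u (G *m (v *m e0)) s s' = relaxmx P u (v *m e0) s s') <->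
  (forall i, i != 0 -> forall j, j != 0 -> j != i -> G i j = 0).
Proof.
have uMu : momat P u \in unitmx by rewrite unitmx_momat // -(unitmx_momat 0 sP).
have uG : G \in unitmx by rewrite unitmx_mul uMQ unitmx_inv.
have uT : shiftmx P u \in unitmx by rewrite unitmx_mul uMu unitmx_inv.
have MQ0 : momat Q 0 = G *m momat P 0 by rewrite mulmxKV.
have G0 : e0 *m G = e0 := delta0_mul_momat_ratio 0 P0 Q0 uM.
have T0 : e0 *m shiftmx P u = e0 := delta0_mul_momat_ratio u P0 P0 uM.
have EG : v *m e0 *m G = v *m e0 by rewrite -mulmxA G0.
rewrite -Smat_commutator_eq0; last first.
  move=> j j0; move/(congr1 (fun A : 'rV_3 => A 0 j)): G0.
  by rewrite -rowE mxE [delta_mx _ _ _ _]mxE (negPf j0) andbF.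
have HE : shiftmx P u *m (v *m e0) *m invmx (shiftmx P u) =
          (shiftmx P u *m v) *m e0 by exact: conj_col_delta0.
have y0 : (shiftmx P u *m v) 0 0 = 1 by rewrite delta0_mul_col.
have relaxE s s' :
    relaxmx Q u (G *m (v *m e0)) s s' = relaxmx P u (v *m e0) s s' <->
    forall i j, j != 0 -> (Smat s s' *m G - G *m Smat s s') i j = 0.
  rewrite relaxmx_change_basis ?HE ?mul_col_delta0_sub1 //.
  exact: momat_change_basis.
by split=> h s s'; apply/relaxE/h.
Qed.

Lemma change_basis_span_iff :
  (forall i, i != 0 -> forall j, j != 0 -> j != i -> G i j = 0) <->
  (forall k, k != 0 -> exists a b, modpoly3 R %| Q k - (a *: P 0 + b *: P k)).
Proof.
have MQ0 : momat Q 0 = G *m momat P 0 by rewrite mulmxKV.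
by split=> h k k0; apply/(exists_dvdp_modpoly3 uM MQ0 k0); exact: h.
Qed.

End ChangeOfMoments.

End D1Q3.

Theorem proposition1 (R : realType) (lam u V alpha : R) (P2 P3 : {poly R}) :
  0 < lam ->
  (size P2 <= 3)%N -> (size P3 <= 3)%N ->
  momat (Phat P2 P3) 0 \in unitmx ->
  (forall s s' : R,
     relaxmx (Phat P2 P3) u (Cmat lam P2 P3 *m Emat lam V alpha) s s'
     = relaxmx (Pstd lam) u (Emat lam V alpha) s s')
  <->
  ((exists a b : R, dvdp (@modpoly3 R) (P2 - (a *: @pol1 R + b *: pol2 lam))) /\
   (exists a b : R, dvdp (@modpoly3 R) (P3 - (a *: @pol1 R + b *: pol3 lam)))).
Proof.
move=> lam_gt0 sP2 sP3 uMQ.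
have uM := momat_Pstd_unit 0 (lt0r_neq0 lam_gt0).
have sQ k : (size (Phat P2 P3 k) <= 3)%N.
  by case: k => -[|[|[|//]]] ? //; rewrite /Phat /= size_poly1.
have v0 : Evec lam V alpha 0 0 = 1 by rewrite mxE.
rewrite Emat_rank1 /Cmat (relaxmx_change_basis_rank1 u (size_Pstd lam) sQ) //.
rewrite change_basis_span_iff //; exact: forall_ord3_neq0.
Qed.
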